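(* Let $l\geq1$ be an integer, and in the dihedral group $D_{2l}=\langle a,b\mid a^2=b^2=(ab)^{2l}=1\rangle$ let $Y_t=a^{\epsilon_1}b^{\epsilon_2}a^{\epsilon_3}b^{\epsilon_4}\cdots$ be the alternating product of $t$ factors (the last factor is $a^{\epsilon_t}$ if $t$ is odd and $b^{\epsilon_t}$ if $t$ is even), where the $\epsilon_i$ are independent and uniform in $\{0,1\}$. Let $p_t(x)=\mathbb{P}(d(Y_t,\{e,a\})=x)$, where $d$ is the distance in the Cayley graph of $D_{2l}$ with respect to $\{a,b\}$. Then for each integer $t\geq0$, the sequence $(p_t(0),p_t(1),\dots,p_t(l-1))$ is non-increasing. *)

From mathcomp Require Import all_boot all_order all_algebra.
Set Implicit Arguments. Unset Strict Implicit. Unset Printing Implicit Defensive.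
Import Order.TTheory GRing.Theory Num.Theory.

(* Concrete model of the dihedral group D_{2l} = <a,b | a^2=b^2=(ab)^{2l}=1>
   (order 4l): elements r^k s^f encoded as pairs (k, f) with k < 2l,
   where r = ab is a rotation of order 2l and s = a is a reflection. *)
Definition delt := (nat * bool)%type.

Definition dmul (l : nat) (g h : delt) : delt :=
  let n := (2 * l)%N in
  (((if g.2 then g.1 + (n - h.1 %% n) else g.1 + h.1) %% n)%N, g.2 (+) h.2).

Definition de : delt := (0%N, false).
Definition da : delt := (0%N, true).
Definition db (l : nat) : delt := (((2 * l).-1)%N, true).  (* b = s r = r^{-1} s *)

(* generator used for the (i+1)-th factor (i 0-indexed): a if i even, b if odd *)
Definition dgen (l i : nat) : delt := if odd i then db l else da.

Fixpoint Yw (l i : nat) (s : seq bool) (g : delt) : delt :=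
  match s with
  | [::] => g
  | e :: s' => Yw l i.+1 s' (if e then dmul l g (dgen l i) else g)
  end.
Definition Y (l : nat) (s : seq bool) : delt := Yw l 0 s de.

Fixpoint ball (l n : nat) : seq delt :=
  match n with
  | 0 => [:: de; da]
  | n'.+1 => let S := ball l n' in
             undup (S ++ [seq dmul l g x | g <- S, x <- [:: da; db l]])
  end.

(* Cayley-graph distance d(g, {e,a}): the least n with g in ball l n.
   The graph has 4l vertices, so n ranges over 0 .. 4l suffice. *)
Definition dist (l : nat) (g : delt) : nat :=
  find (fun n => g \in ball l n) (iota 0 (4 * l).+1).

Definition pt (l t x : nat) : rat :=
  (#|[set s : t.-tuple bool | dist l (Y l s) == x]|)%:R / (2 ^ t)%:R.

From mathcomp Require Import all_boot all_order all_algebra zify.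
Import Num.Theory.

(* Right multiplication by a and b walks along the Cayley graph of D_{2l},
   which is the cycle e, a, ab, aba, ... of length 4l.  The distance to
   {e, a} is thus a depth in {0, ..., 2l - 1}, and multiplying by a (resp. b)
   acts on depths by a fixed involution that pairs neighbouring depths.  So
   the number c_t(x) of sign vectors with d(Y_t, {e, a}) = x satisfies
   c_{t+1}(x) = c_t(x) + c_t(step x); since the step either swaps x and x + 1
   or keeps them in order, monotonicity of c_t passes to c_{t+1}. *)

Ltac case_ifs := repeat match goal with |- context[if ?b then _ else _] =>
  lazymatch b with context[if _ then _ else _] => fail
  | _ => let H := fresh "H" in destruct b eqn:H end end.

Lemma find_iota_leq m i N : i <= m < i + N -> find (fun n => m <= n) (iota i N) = m - i.
Proof.
elim: N i => [|N IH] i i_m; first lia.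
by rewrite /=; case: leqP => [|m_i]; [lia | rewrite IH; lia].
Qed.

Lemma card_rcons_tuple (T : finType) n (P : pred (seq T)) :
  #|[set s : n.+1.-tuple T | P s]| =
  \sum_(x : T) #|[set s : n.-tuple T | P (rcons s x)]|.
Proof.
pose f (p : n.-tuple T * T) := [tuple of rcons p.1 p.2].
have f_bij : bijective f.
  apply: inj_card_bij => [[s x] [s' x'] /(congr1 val) /rcons_inj [/val_inj -> ->] //|].
  by rewrite card_prod !card_tuple expnS mulnC.
rewrite -sum1dep_card (reindex f) /=; last exact: onW_bij.
rewrite big_mkcond.
rewrite -(pair_big xpredT xpredT (fun (s : n.-tuple T) x => if P (rcons s x) then 1 else 0)).
by rewrite exchange_big; apply: eq_bigr => x _; rewrite -big_mkcond sum1dep_card.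
Qed.

Lemma nonincreasing_add_comp N (c sigma : nat -> nat) x :
  (forall y, y < N -> c y.+1 <= c y) ->
  (forall y, y <= N -> sigma y <= N) ->
  (forall y, y < N -> sigma y = y.+1 /\ sigma y.+1 = y \/ sigma y <= sigma y.+1) ->
  x < N -> c x.+1 + c (sigma x.+1) <= c x + c (sigma x).
Proof.
move=> c_dec sigma_le sigma_adj x_lt.
have c_anti : {in [pred n | n <= N] &, {homo c : i j / i <= j >-> j <= i}}.
  apply: homo_leq_in => [y | y z w | y z _ /[!inE] z_le k | y _ /[!inE] /c_dec //];
    rewrite ?inE; lia.
case: (sigma_adj x x_lt) => [[-> ->]|sigma_mono]; first by rewrite addnC.
by apply: leq_add; [exact: c_dec | apply: c_anti; rewrite ?inE ?sigma_le //; lia].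
Qed.

Lemma Yw_rcons l i s e g : Yw l i (rcons s e) g =
  (if e then dmul l (Yw l i s g) (dgen l (i + size s)) else Yw l i s g).
Proof. by elim: s i g => [|x s IH] i g /=; rewrite ?addn0 ?IH ?addSnnS. Qed.

Section DihedralWalk.

Variable l : nat.
Hypothesis l_gt0 : 0 < l.

Definition delt_valid (g : delt) : bool := g.1 < 2 * l.

(* r^k s^f is the vertex 2k + f of the cycle; its depth is its distance to
   the vertices 0 and 1. *)
Definition depth (g : delt) : nat :=
  let p := 2 * g.1 + g.2 in
  if p <= 1 then 0 else if p <= 2 * l then p.-1 else 4 * l - p.

(* a swaps the vertices 2k and 2k + 1, i.e. the depths 2k - 1 and 2k;
   b swaps 2k + 1 and 2k + 2, i.e. the depths 2k and 2k + 1. *)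
Definition step_a (d : nat) : nat :=
  if d == 0 then 0 else if odd d then (if d == (2 * l).-1 then d else d.+1) else d.-1.

Definition step_b (d : nat) : nat := if odd d then d.-1 else d.+1.

Definition step (i d : nat) : nat := if odd i then step_b d else step_a d.

Lemma dmul_valid g h : delt_valid (dmul l g h).
Proof. by rewrite /delt_valid /dmul ltn_pmod //; lia. Qed.

Lemma dmul_a g : delt_valid g -> dmul l g da = (g.1, ~~ g.2).
Proof.
case: g => k [] /=; rewrite /delt_valid /= => k_lt; rewrite /dmul /=.
- by rewrite mod0n subn0 modnDr modn_small.
- by rewrite addn0 modn_small.
Qed.

Lemma dmul_b g : delt_valid g -> dmul l g (db l) =
  (if g.2 then (if g.1.+1 == 2 * l then 0 else g.1.+1)
   else (if g.1 == 0 then (2 * l).-1 else g.1.-1), ~~ g.2).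
Proof.
case: g => k [] /=; rewrite /delt_valid /= => k_lt; rewrite /dmul /db /=.
- rewrite (@modn_small (2 * l).-1); last by lia.
  have -> : k + (2 * l - (2 * l).-1) = k.+1 by lia.
  by case: eqP => [->|ne]; rewrite ?modnn // modn_small //; lia.
- case: eqP => [->|ne]; first by rewrite add0n modn_small //; lia.
  by rewrite (_ : k + _ = k.-1 + 2 * l) ?modnDr ?modn_small //; lia.
Qed.

Lemma dmulK_gen i g : delt_valid g -> dmul l (dmul l g (dgen l i)) (dgen l i) = g.
Proof.
rewrite /dgen; case: odd => g_valid; last by rewrite !dmul_a ?negbK //; case: g g_valid.
rewrite dmul_b ?dmul_valid // dmul_b //; case: g g_valid => k [];
  rewrite /delt_valid /= => k_lt; congr pair; case_ifs; lia.
Qed.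

Lemma depth_mul_gen i g : delt_valid g -> depth (dmul l g (dgen l i)) = step i (depth g).
Proof.
rewrite /dgen /step; case: odd => g_valid; [rewrite dmul_b // | rewrite dmul_a //];
  case: g g_valid => k [] /=; rewrite /delt_valid /depth /step_a /step_b /= => k_lt;
  case_ifs; lia.
Qed.

Lemma depth_le g : delt_valid g -> depth g <= (2 * l).-1.
Proof. by case: g => k [] /=; rewrite /delt_valid /depth /= => k_lt; case_ifs; lia. Qed.

Lemma step_le i d : step i d <= d.+1.
Proof. by rewrite /step /step_a /step_b; case: odd; case_ifs; lia. Qed.

Lemma step_le_depth i d : d <= (2 * l).-1 -> step i d <= (2 * l).-1.
Proof. by rewrite /step /step_a /step_b; case: odd; case_ifs; lia. Qed.

Lemma step_pred d : 0 < d <= (2 * l).-1 -> step 0 d = d.-1 \/ step 1 d = d.-1.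
Proof. by rewrite /step /step_a /step_b /=; case_ifs; lia. Qed.

Lemma step_involutive i d : d <= (2 * l).-1 -> step i (step i d) = d.
Proof. by rewrite /step /step_a /step_b; case: odd; case_ifs; lia. Qed.

Lemma step_adjacent i x : x < (2 * l).-1 ->
  step i x = x.+1 /\ step i x.+1 = x \/ step i x <= step i x.+1.
Proof. by rewrite /step /step_a /step_b; case: odd; case_ifs; lia. Qed.

Lemma ball_valid n : all delt_valid (ball l n).
Proof.
elim: n => [|n IH] /=; first by rewrite /delt_valid /=; lia.
apply/allP => g; rewrite mem_undup mem_cat => /orP [/(allP IH) //|].
by case/flatten_mapP => h _; rewrite !inE => /orP [] /eqP ->; apply: dmul_valid.
Qed.

Lemma mem_ball n g : delt_valid g -> (g \in ball l n) = (depth g <= n).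
Proof.
elim: n g => [|n IH] g g_valid.
  rewrite !inE /de /da; case: g g_valid => k [];
    rewrite /delt_valid /depth /eq_op /= ?andbT ?andbF ?orbF => k_lt; case_ifs; lia.
rewrite /= mem_undup mem_cat; apply/idP/idP.
- case/orP => [|/flatten_mapP [h h_ball h_near]]; first by rewrite IH //; lia.
  have h_valid := allP (ball_valid n) h h_ball.
  move: h_ball; rewrite IH // => h_depth.
  have [i ->] : exists i, g = dmul l h (dgen l i).
    by move: h_near; rewrite !inE => /orP [] /eqP ->; [exists 0 | exists 1].
  by rewrite depth_mul_gen //; have := step_le i (depth h); lia.
- move=> g_depth; case: (leqP (depth g) n) => [|n_lt]; first by rewrite IH // => ->.
  apply/orP; right; apply/flatten_mapP.
  have [i g_step] : exists i, step i (depth g) = (depth g).-1.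
    have depth_g_le := depth_le g g_valid.
    by case: (step_pred (depth g)) => [|<-|<-]; [lia | exists 0 | exists 1].
  exists (dmul l g (dgen l i)); first by rewrite IH ?dmul_valid // depth_mul_gen // g_step; lia.
  rewrite -{1}(dmulK_gen i g g_valid).
  by rewrite /dgen; case: odd; rewrite !inE eqxx ?orbT.
Qed.

Lemma dist_depth g : delt_valid g -> dist l g = depth g.
Proof.
move=> g_valid; rewrite /dist (eq_find (a2 := fun n => depth g <= n)).
  by rewrite find_iota_leq ?subn0 //; have := depth_le g g_valid; lia.
by move=> n; rewrite mem_ball.
Qed.

Lemma Y_valid s : delt_valid (Y l s).
Proof.
have : delt_valid de by rewrite /delt_valid /=; lia.
rewrite /Y; elim: s 0 de => [|[] s IH] i g g_valid //=; apply: IH => //.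
exact: dmul_valid.
Qed.

Definition depth_count (t x : nat) : nat :=
  #|[set s : t.-tuple bool | dist l (Y l s) == x]|.

Lemma depth_count_0 x : depth_count 0 x = (x == 0).
Proof.
rewrite /depth_count.
have -> : [set s : 0.-tuple bool | dist l (Y l s) == x] = if x == 0 then setT else set0.
  apply/setP => s; rewrite (tuple0 s) inE dist_depth //; last by rewrite /delt_valid /=; lia.
  by case: x => [|x]; rewrite ?inE /Y /depth /=.
by case: eqP => _; rewrite ?cardsT ?card_tuple ?cards0.
Qed.

Lemma depth_count_S t x : x <= (2 * l).-1 ->
  depth_count t.+1 x = depth_count t x + depth_count t (step t x).
Proof.
move=> x_le; rewrite /depth_count.
rewrite (@card_rcons_tuple _ _ (fun u => dist l (Y l u) == x)) big_bool addnC.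
congr addn; apply: eq_card => s; rewrite !inE /Y Yw_rcons //= size_tuple -/(Y l s).
have Y_s_valid := Y_valid s.
rewrite !dist_depth ?dmul_valid // depth_mul_gen //.
by apply/eqP/eqP => [<-|->]; rewrite step_involutive // depth_le.
Qed.

Lemma depth_count_nonincreasing t x : x < (2 * l).-1 ->
  depth_count t x.+1 <= depth_count t x.
Proof.
elim: t x => [|t IH] x x_lt; first by rewrite !depth_count_0.
rewrite !depth_count_S //; try lia.
apply: (@nonincreasing_add_comp _ _ (step t) x IH _ _ x_lt) => y.
- exact: step_le_depth.
- exact: step_adjacent.
Qed.

End DihedralWalk.

Theorem fact3p3 (l : nat) (hl : (1 <= l)%N) (t x : nat) (hx : (x.+1 <= l.-1)%N) :
  (pt l t x.+1 <= pt l t x)%R.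
Proof.
rewrite /pt ler_wpM2r ?invr_ge0 ?ler0n // ler_nat.
by apply: depth_count_nonincreasing => //; lia.
Qed.
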